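(* If $\Gamma\vdash M:\sigma$ is derivable in $\cap ES$, then $\Gamma\vdash M^{\flat}:\sigma$ is derivable in $\cap J$.
   Context: Terms $\mathtt T_J$: $t,u,r ::= x \mid \lambda x.t \mid t(u,y.r)$ ($y$ bound in $r$), up to $\alpha$-equivalence. ES terms: $M,N,P ::= x \mid \lambda x.M \mid MN \mid M[x\backslash N]$ ($x$ bound in $M$ in $M[x\backslash N]$). Translation $(\cdot)^\flat$: ES $\to\mathtt T_J$: $x^\flat=x$, $(\lambda x.M)^\flat=\lambda x.M^\flat$, $(MN)^\flat=M^\flat(N^\flat,z.z)$, $(M[x\backslash N])^\flat=(\lambda z.z)(N^\flat,x.M^\flat)$ ($z$ fresh). Types $\sigma,\tau ::= \alpha \mid \mathcal M\to\sigma$, $\mathcal M=[\sigma_i]_{i\in I}$ a finite possibly empty multiset; $\sqcup$ multiset union; environments map variables to multisets, $\wedge$ pointwise union, $\Gamma;x:\mathcal M$ extension with $x\notin\mathrm{dom}\,\Gamma$; $\mathrm{ch}(\mathcal M)=\mathcal M$ if $\mathcal M\ne[\,]$, $\mathrm{ch}([\,])=[\tau]$ for an arbitrary $\tau$. Both systems share rules (var) $x:[\sigma]\vdash x:\sigma$; (abs) from $\Gamma;x:\mathcal M\vdash t:\sigma$ infer $\Gamma\vdash\lambda x.t:\mathcal M\to\sigma$; (many) from $(\Gamma_i\vdash t:\sigma_i)_{i\in I}$, $I\ne\emptyset$, infer $\wedge_i\Gamma_i\vdash t:[\sigma_i]_{i\in I}$. $\cap J$ additionally has (app): from $\Gamma\vdash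 t:\mathrm{ch}([\mathcal M_i\to\tau_i]_{i\in I})$, $\Delta\vdash u:\mathrm{ch}(\sqcup_i\mathcal M_i)$, $\Lambda;y:[\tau_i]_{i\in I}\vdash r:\sigma$ infer $\Gamma\wedge\Delta\wedge\Lambda\vdash t(u,y.r):\sigma$. $\cap ES$ additionally has (app): from $\Gamma\vdash M:\mathcal M\to\sigma$ and $\Delta\vdash N:\mathrm{ch}(\mathcal M)$ infer $\Gamma\wedge\Delta\vdash MN:\sigma$; and (sub): from $\Gamma;x:\mathcal M\vdash P:\sigma$ and $\Delta\vdash N:\mathrm{ch}(\mathcal M)$ infer $\Gamma\wedge\Delta\vdash P[x\backslash N]:\sigma$. *)

From Stdlib Require Import List Arith.
Import ListNotations.

Definition var := nat.

(** Terms of the J-calculus T_J: x | \x.t | t(u, y.r)  (y bound in r). *)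
Inductive tJ : Type :=
| JVar : var -> tJ
| JLam : var -> tJ -> tJ
| JApp : tJ -> tJ -> var -> tJ -> tJ.

(** ES terms: x | \x.M | M N | M[x\N]  (x bound in M). *)
Inductive tES : Type :=
| EVar : var -> tES
| ELam : var -> tES -> tES
| EApp : tES -> tES -> tES
| ESub : tES -> var -> tES -> tES.

(** Translation (.)^flat. The bound variable z is irrelevant up to alpha;
    we use the fixed name 0 (it is only ever bound around the body z). *)
Definition zv : var := 0.
Fixpoint flat (M : tES) : tJ :=
  match M with
  | EVar x => JVar x
  | ELam x M => JLam x (flat M)
  | EApp M N => JApp (flat M) (flat N) zv (JVar zv)
  | ESub M x N => JApp (JLam zv (JVar zv)) (flat N) x (flat M)
  end.

(** Types: sigma ::= alpha | Mset -> sigma, multisets represented by lists,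
    identified up to (nested) permutation via [ty_eq]/[mty_eq]. *)
Inductive ty : Type :=
| TVar : nat -> ty
| TArr : list ty -> ty -> ty.

Definition mty := list ty.

Inductive ty_eq : ty -> ty -> Prop :=
| teq_var a : ty_eq (TVar a) (TVar a)
| teq_arr M M' s s' : mty_eq M M' -> ty_eq s s' -> ty_eq (TArr M s) (TArr M' s')
with mty_eq : mty -> mty -> Prop :=
| meq_nil : mty_eq [] []
| meq_skip s s' M M' : ty_eq s s' -> mty_eq M M' -> mty_eq (s :: M) (s' :: M')
| meq_swap s t M : mty_eq (s :: t :: M) (t :: s :: M)
| meq_trans M1 M2 M3 : mty_eq M1 M2 -> mty_eq M2 M3 -> mty_eq M1 M3.

(** Environments: variables to multisets; dom G = {x | G x <> []}. *)
Definition env := var -> mty.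
Definition env_eq (G D : env) : Prop := forall x, mty_eq (G x) (D x).
Definition env_empty : env := fun _ => [].
Definition env_union (G D : env) : env := fun x => G x ++ D x.
Definition env_single (x : var) (s : ty) : env :=
  fun y => if Nat.eqb y x then [s] else [].
(** [env_ext G x M] is G;x:M, used only when x is not in dom G (G x = []). *)
Definition env_ext (G : env) (x : var) (M : mty) : env :=
  fun y => if Nat.eqb y x then M else G y.

Inductive chR : mty -> mty -> Prop :=
| ch_ne M : M <> [] -> chR M M
| ch_nil tau : chR [] [tau].

(** The conversion rules express that
    types and environments are multisets (lists up to permutation). *)
Inductive typJ : env -> tJ -> ty -> Prop :=
| J_var x s : typJ (env_single x s) (JVar x) s
| J_abs G x M t s :
    G x = [] -> typJ (env_ext G x M) t s -> typJ G (JLam x t) (TArr M s)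
| J_app G D L t u y r s (ps : list (mty * ty)) A B :
    chR (map (fun p => TArr (fst p) (snd p)) ps) A ->
    mtypJ G t A ->
    chR (concat (map fst ps)) B ->
    mtypJ D u B ->
    L y = [] ->
    typJ (env_ext L y (map snd ps)) r s ->
    typJ (env_union G (env_union D L)) (JApp t u y r) s
| J_conv G G' t s s' : env_eq G G' -> ty_eq s s' -> typJ G t s -> typJ G' t s'
with mtypJ : env -> tJ -> mty -> Prop :=
| J_many1 G t s : typJ G t s -> mtypJ G t [s]
| J_manyS G D t s M : typJ G t s -> mtypJ D t M -> mtypJ (env_union G D) t (s :: M)
| J_mconv G G' t M M' : env_eq G G' -> mty_eq M M' -> mtypJ G t M -> mtypJ G' t M'.

Inductive typES : env -> tES -> ty -> Prop :=
| E_var x s : typES (env_single x s) (EVar x) s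
| E_abs G x M t s :
    G x = [] -> typES (env_ext G x M) t s -> typES G (ELam x t) (TArr M s)
| E_app G D M N Ms Ms' s :
    typES G M (TArr Ms s) -> chR Ms Ms' -> mtypES D N Ms' ->
    typES (env_union G D) (EApp M N) s
| E_sub G D P x N Ms Ms' s :
    G x = [] -> typES (env_ext G x Ms) P s -> chR Ms Ms' -> mtypES D N Ms' ->
    typES (env_union G D) (ESub P x N) s
| E_conv G G' t s s' : env_eq G G' -> ty_eq s s' -> typES G t s -> typES G' t s'
with mtypES : env -> tES -> mty -> Prop :=
| E_many1 G t s : typES G t s -> mtypES G t [s]
| E_manyS G D t s M : typES G t s -> mtypES D t M -> mtypES (env_union G D) t (s :: M)
| E_mconv G G' t M M' : env_eq G G' -> mty_eq M M' -> mtypES G t M -> mtypES G' t M'.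

(* An application [M N] becomes the generalized application [M(N, z.z)], typed
   with the single arrow of [M] and the identity continuation.  A substitution
   [P[x\N]] becomes [I(N, x.P)] with [I = \z.z]: typing [I] with one identity
   type [[t] -> t] for each [t] in the multiset [Ms] of [x] makes the distant
   application hand exactly [Ms] to [x]; when [Ms] is empty, [I] gets any single
   arrow and [N] keeps its type [ch([])]. *)
From Stdlib Require Import List Permutation.
Import ListNotations.

Fixpoint ty_eq_refl (t : ty) : ty_eq t t :=
  match t with
  | TVar a => teq_var a
  | TArr M s =>
      teq_arr M M s s
        ((fix mty_eq_refl (l : mty) : mty_eq l l :=
            match l with
            | [] => meq_nil
            | u :: l' => meq_skip u u l' l' (ty_eq_refl u) (mty_eq_refl l')
            end) M)
        (ty_eq_refl s)
  end.

Lemma mty_eq_refl (l : mty) : mty_eq l l.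
Proof. induction l; constructor; auto using ty_eq_refl. Qed.

Lemma Permutation_mty_eq (l l' : mty) : Permutation l l' -> mty_eq l l'.
Proof.
  induction 1.
  - exact meq_nil.
  - exact (meq_skip _ _ _ _ (ty_eq_refl x) IHPermutation).
  - exact (meq_swap y x l).
  - exact (meq_trans _ _ _ IHPermutation1 IHPermutation2).
Qed.

Lemma concat_map_singleton {A : Type} (l : list A) : concat (map (fun a => [a]) l) = l.
Proof. induction l as [|a l IH]; simpl; congruence. Qed.

Lemma env_eq_union_comm (G D : env) : env_eq (env_union G D) (env_union D G).
Proof. intro x; apply Permutation_mty_eq, Permutation_app_comm. Qed.

Lemma typJ_conv_env (G G' : env) (t : tJ) (s : ty) :
  env_eq G G' -> typJ G t s -> typJ G' t s.
Proof. intros HG; apply J_conv; [exact HG | apply ty_eq_refl]. Qed.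

Section Identity.

Variable z : var.

Definition idJ : tJ := JLam z (JVar z).

Lemma typJ_id (t : ty) : typJ env_empty idJ (TArr [t] t).
Proof. apply J_abs; [reflexivity | exact (J_var z t)]. Qed.

Lemma mtypJ_id (l : mty) :
  l <> [] -> mtypJ env_empty idJ (map (fun t => TArr [t] t) l).
Proof.
  induction l as [|t [|t' l] IH]; intros Hl; [congruence | |].
  - exact (J_many1 _ _ _ (typJ_id t)).
  - exact (J_manyS _ _ _ _ _ (typJ_id t) (IH ltac:(discriminate))).
Qed.

Lemma typJ_app_cont_var (G D : env) (t u : tJ) (Ms Ms' : mty) (s : ty) :
  typJ G t (TArr Ms s) -> chR Ms Ms' -> mtypJ D u Ms' ->
  typJ (env_union G D) (JApp t u z (JVar z)) s.
Proof.
  intros Ht HMs Hu.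
  apply typJ_conv_env with (G := env_union G (env_union D env_empty)).
  { intro x; unfold env_union, env_empty; cbv beta; rewrite app_nil_r; apply mty_eq_refl. }
  apply J_app with (ps := [(Ms, s)]) (A := [TArr Ms s]) (B := Ms').
  - apply ch_ne; discriminate.
  - exact (J_many1 _ _ _ Ht).
  - cbn; rewrite app_nil_r; exact HMs.
  - exact Hu.
  - reflexivity.
  - exact (J_var z s).
Qed.

Lemma typJ_app_fun_id (G D : env) (x : var) (u r : tJ) (Ms Ms' : mty) (s : ty) :
  G x = [] -> typJ (env_ext G x Ms) r s -> chR Ms Ms' -> mtypJ D u Ms' ->
  typJ (env_union G D) (JApp idJ u x r) s.
Proof.
  intros Hx Hr HMs Hu.
  apply typJ_conv_env with (G := env_union env_empty (env_union D G)).
  { intro y; exact (env_eq_union_comm D G y). }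
  destruct Ms as [|t l].
  - inversion HMs as [? Hne | tau]; subst; [congruence |].
    apply J_app with (ps := []) (A := [TArr [tau] tau]) (B := [tau]); trivial.
    + apply ch_nil.
    + exact (J_many1 _ _ _ (typJ_id tau)).
  - inversion HMs; subst.
    apply J_app with (ps := map (fun t => ([t], t)) (t :: l))
      (A := map (fun t => TArr [t] t) (t :: l)) (B := t :: l); trivial.
    + rewrite map_map; apply ch_ne; discriminate.
    + apply mtypJ_id; discriminate.
    + rewrite map_map.
      replace (concat _) with (t :: l) by (symmetry; apply concat_map_singleton).
      apply ch_ne; discriminate.
    + rewrite map_map; cbn [snd]; rewrite map_id; exact Hr.
Qed.

End Identity.

Scheme typES_mut := Induction for typES Sort Prop
with mtypES_mut := Induction for mtypES Sort Prop.

Theorem mainTheorem18 (G : env) (M : tES) (s : ty) :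
  typES G M s -> typJ G (flat M) s.
Proof.
  apply (typES_mut (fun G M s _ => typJ G (flat M) s)
                   (fun G M Ms _ => mtypJ G (flat M) Ms)); simpl; intros.
  - apply J_var.
  - apply J_abs; assumption.
  - eapply typJ_app_cont_var; eassumption.
  - eapply typJ_app_fun_id; eassumption.
  - eapply J_conv; eassumption.
  - apply J_many1; assumption.
  - apply J_manyS; assumption.
  - eapply J_mconv; eassumption.
Qed.
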